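(* Every Coxeter group is pq-generated; that is, for a Coxeter group $W$ with Coxeter generating set $S$ (presentation $\langle S\mid s^2=e\ (s\in S),\ (st)^{m_{st}}=e\ (s\neq t,\ m_{st}<\infty)\rangle$ with integers $m_{st}\geq 2$), there exists a power quandle $P$ with $W\cong\mathrm{Gr}(P)$. In particular this holds for the symmetric groups.
   Context: A power quandle $(P,\rhd,\pi,e)$ consists of a set $P$, a binary operation $\rhd$, an element $e$, and maps $\pi^n\colon P\to P$ ($n\in\mathbb{Z}$) satisfying: each $\lambda_a\colon b\mapsto a\rhd b$ is bijective and $a\rhd(b\rhd c)=(a\rhd b)\rhd(a\rhd c)$; $a\rhd a=a$; $e\rhd b=b$, $a\rhd e=e$; $\pi^1=\mathrm{id}$, $\pi^m\circ\pi^n=\pi^{mn}$; $\pi^0(a)=e$; $a\rhd\pi^n(b)=\pi^n(a\rhd b)$; $\pi^n(a)\rhd b=\lambda_a^n(b)$. For a power quandle $P$, $\mathrm{Gr}(P)$ is the group with generators $\sigma(a)$, $a\in P$, and relations $\sigma(a\rhd b)=\sigma(a)\sigma(b)\sigma(a)^{-1}$, $\sigma(\pi^n(a))=\sigma(a)^n$, $\sigma(e)=1$. A group $G$ is pq-generated if there exists a power quandle $P$ with $G\cong\mathrm{Gr}(P)$. *)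

From Stdlib Require Import ZArith.
Open Scope Z_scope.

Record Group := {
  gcar :> Type;
  gmul : gcar -> gcar -> gcar;
  gone : gcar;
  ginv : gcar -> gcar;
  gmul_assoc : forall x y z, gmul x (gmul y z) = gmul (gmul x y) z;
  gmul_1l : forall x, gmul gone x = x;
  gmul_1r : forall x, gmul x gone = x;
  gmul_Vl : forall x, gmul (ginv x) x = gone;
  gmul_Vr : forall x, gmul x (ginv x) = gone
}.

Arguments gmul {g} _ _.
Arguments gone {g}.
Arguments ginv {g} _.

Definition gpow_nat {G : Group} (x : G) (n : nat) : G :=
  Nat.iter n (fun y => gmul x y) gone.

Definition gpow {G : Group} (x : G) (n : Z) : G :=
  match n with
  | Z0 => gone
  | Zpos p => gpow_nat x (Pos.to_nat p)
  | Zneg p => ginv (gpow_nat x (Pos.to_nat p))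
  end.

Definition is_hom {G H : Group} (f : G -> H) : Prop :=
  forall x y, f (gmul x y) = gmul (f x) (f y).

Definition bijective_fun {A B : Type} (f : A -> B) : Prop :=
  exists g : B -> A, (forall x, g (f x) = x) /\ (forall y, f (g y) = y).

Definition group_iso (G H : Group) : Prop :=
  exists f : G -> H, is_hom f /\ bijective_fun f.

(* G together with sigma : X -> G is the group presented by generators X
   and relations R (R H f says that f : X -> H satisfies the relations),
   i.e. it satisfies the universal property of the presented group. *)
Definition is_presented_by (X : Type) (R : forall H : Group, (X -> H) -> Prop)
    (G : Group) (sigma : X -> G) : Prop :=
  R G sigma /\
  forall (H : Group) (f : X -> H), R H f ->
    exists h : G -> H, is_hom h /\ (forall x, h (sigma x) = f x) /\
      forall h' : G -> H, is_hom h' -> (forall x, h' (sigma x) = f x) ->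
        forall g, h' g = h g.

(* lam_pow_rel rhd a n b c  <->  lambda_a^n (b) = c, for n : Z
   (for n < 0 this uses the inverse bijection of lambda_a) *)
Definition lam_pow_rel {P : Type} (rhd : P -> P -> P) (a : P) (n : Z) (b c : P)
  : Prop :=
  if (0 <=? n) then c = Nat.iter (Z.to_nat n) (rhd a) b
  else b = Nat.iter (Z.to_nat (- n)) (rhd a) c.

Definition is_power_quandle (P : Type) (rhd : P -> P -> P) (pi : Z -> P -> P)
    (e : P) : Prop :=
  (forall a, bijective_fun (rhd a)) /\
  (forall a b c, rhd a (rhd b c) = rhd (rhd a b) (rhd a c)) /\
  (forall a, rhd a a = a) /\
  (forall b, rhd e b = b) /\
  (forall a, rhd a e = e) /\
  (forall a, pi 1 a = a) /\
  (forall m n a, pi m (pi n a) = pi (m * n) a) /\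
  (forall a, pi 0 a = e) /\
  (forall n a b, rhd a (pi n b) = pi n (rhd a b)) /\
  (forall n a b, lam_pow_rel rhd a n b (rhd (pi n a) b)).

Definition Gr_rel (P : Type) (rhd : P -> P -> P) (pi : Z -> P -> P) (e : P)
    (H : Group) (s : P -> H) : Prop :=
  (forall a b, s (rhd a b) = gmul (gmul (s a) (s b)) (ginv (s a))) /\
  (forall n a, s (pi n a) = gpow (s a) n) /\
  s e = gone.

Definition pq_generated (G : Group) : Prop :=
  exists (P : Type) (rhd : P -> P -> P) (pi : Z -> P -> P) (e : P),
    is_power_quandle P rhd pi e /\
    exists (GrP : Group) (sigma : P -> GrP),
      is_presented_by P (Gr_rel P rhd pi e) GrP sigma /\ group_iso G GrP.

(* m s t = None encodes m_st = infinity *)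
Definition coxeter_matrix {S : Type} (m : S -> S -> option nat) : Prop :=
  (forall s t, m s t = m t s) /\
  (forall s t k, s <> t -> m s t = Some k -> (2 <= k)%nat).

Definition coxeter_rel {S : Type} (m : S -> S -> option nat)
    (H : Group) (f : S -> H) : Prop :=
  (forall s, gmul (f s) (f s) = gone) /\
  (forall s t k, s <> t -> m s t = Some k -> gpow_nat (gmul (f s) (f t)) k = gone).

Definition is_coxeter_group (S : Type) (m : S -> S -> option nat)
    (W : Group) (s : S -> W) : Prop :=
  coxeter_matrix m /\ is_presented_by S (coxeter_rel m) W s.

From Stdlib Require Import ZArith Lia ProofIrrelevance.

(* Take for P the identity together with all reflections of W (conjugates of
   the Coxeter generators), with a ▷ b = a b a and π^n a = a for odd n,
   π^n a = e for even n.  The inclusion P -> W satisfies the relations of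
   Gr(P).  Conversely, let f : P -> H satisfy them.  Then every f a is an
   involution and f respects conjugation; since (st)^j s is a reflection
   built from s and t by j conjugations, and (st)^k = 1 forces
   (st)^(k-1) s = t, we get (f s f t)^k = 1.  So f restricted to the
   generators factors through W, and the factorisation agrees with f on all
   of P because reflections are iterated conjugates of generators.  Only
   s^2 = 1 and the relations (st)^k = 1 are used, not the conditions on the
   Coxeter matrix. *)

Lemma Z_even_of_nat k : Z.even (Z.of_nat k) = Nat.even k.
Proof.
  induction k as [|k IH]; [reflexivity|].
  rewrite Nat2Z.inj_succ, Z.even_succ, Nat.even_succ, <- Z.negb_even,
    <- Nat.negb_even, IH.
  reflexivity.
Qed.

Section GroupFacts.
Variable G : Group.
Implicit Types x y a b : G.

Lemma ginv_unique x y : gmul x y = gone -> ginv x = y.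
Proof.
  intro Hxy. rewrite <- (gmul_1r G (ginv x)), <- Hxy.
  rewrite gmul_assoc, gmul_Vl, gmul_1l. reflexivity.
Qed.

Lemma ginv_invol x : gmul x x = gone -> ginv x = x.
Proof. apply ginv_unique. Qed.

Lemma hom_one (H : Group) (h : G -> H) : is_hom h -> h gone = gone.
Proof.
  intro Hh. pose proof (Hh gone gone) as E. rewrite gmul_1l in E.
  transitivity (gmul (ginv (h gone)) (gmul (h gone) (h gone))).
  - rewrite gmul_assoc, gmul_Vl, gmul_1l. reflexivity.
  - rewrite <- E. apply gmul_Vl.
Qed.

Lemma group_iso_refl : group_iso G G.
Proof.
  exists (fun x => x). split; [intros x y; reflexivity|].
  exists (fun x => x). split; reflexivity.
Qed.

Lemma gpow_nat_succ_r x j : gpow_nat x (S j) = gmul (gpow_nat x j) x.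
Proof.
  induction j as [|j IH].
  - simpl. rewrite gmul_1l, gmul_1r. reflexivity.
  - change (gpow_nat x (S (S j))) with (gmul x (gpow_nat x (S j))).
    rewrite IH at 1. rewrite gmul_assoc. reflexivity.
Qed.

Lemma gpow_nat_invol x k :
  gmul x x = gone -> gpow_nat x k = if Nat.even k then gone else x.
Proof.
  intro Hx. induction k as [|k IH]; [reflexivity|].
  change (gpow_nat x (S k)) with (gmul x (gpow_nat x k)).
  rewrite IH, Nat.even_succ, <- Nat.negb_even.
  destruct (Nat.even k); simpl; [apply gmul_1r | exact Hx].
Qed.

Lemma gpow_invol x n :
  gmul x x = gone -> gpow x n = if Z.even n then gone else x.
Proof.
  intro Hx. destruct n as [|q|q]; simpl gpow; [reflexivity| |].
  - rewrite gpow_nat_invol, <- positive_nat_Z, Z_even_of_nat by exact Hx.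
    reflexivity.
  - change (Z.neg q) with (- Z.pos q).
    rewrite gpow_nat_invol, Z.even_opp, <- positive_nat_Z, Z_even_of_nat
      by exact Hx.
    destruct (Nat.even (Pos.to_nat q)); apply ginv_invol;
      [apply gmul_1l | exact Hx].
Qed.

Lemma mul_gpow_nat_swap a b j :
  gmul a (gpow_nat (gmul b a) j) = gmul (gpow_nat (gmul a b) j) a.
Proof.
  induction j as [|j IH].
  - simpl. rewrite gmul_1l, gmul_1r. reflexivity.
  - simpl gpow_nat.
    rewrite (gmul_assoc G a), (gmul_assoc G a b a),
      <- (gmul_assoc G (gmul a b) a), IH, !gmul_assoc.
    reflexivity.
Qed.

Definition alt j a b : G := gmul (gpow_nat (gmul a b) j) a.

Lemma alt_mulr j a b : gmul (alt j a b) b = gpow_nat (gmul a b) (S j).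
Proof. unfold alt. rewrite gpow_nat_succ_r, <- gmul_assoc. reflexivity. Qed.

Lemma conj_alt j a b : gmul (gmul a (alt j b a)) a = alt (S j) a b.
Proof.
  unfold alt. rewrite (gmul_assoc G a), mul_gpow_nat_swap, gpow_nat_succ_r,
    !gmul_assoc.
  reflexivity.
Qed.

End GroupFacts.

Arguments alt {G} j a b.

Section InvolutionQuandle.
Variables (G : Group) (Q : G -> Prop).
Hypothesis Q_one : Q gone.
Hypothesis Q_invol : forall x, Q x -> gmul x x = gone.
Hypothesis Q_conj : forall a b, Q a -> Q b -> Q (gmul (gmul a b) a).

Definition invq : Type := {x : G | Q x}.

Definition invq_val (p : invq) : G := proj1_sig p.

Lemma invq_val_inj p q : invq_val p = invq_val q -> p = q.
Proof.
  destruct p as [x Hx], q as [y Hy]; simpl. intros <-.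
  f_equal; apply proof_irrelevance.
Qed.

Lemma invq_val_invol p : gmul (invq_val p) (invq_val p) = gone.
Proof. apply Q_invol. exact (proj2_sig p). Qed.

Definition invq_rhd (a b : invq) : invq :=
  exist _ _ (Q_conj _ _ (proj2_sig a) (proj2_sig b)).

Definition invq_e : invq := exist _ gone Q_one.

Definition invq_pi (n : Z) (a : invq) : invq :=
  if Z.even n then invq_e else a.

Lemma invq_rhdK a b : invq_rhd a (invq_rhd a b) = b.
Proof.
  apply invq_val_inj. simpl. pose proof (invq_val_invol a) as Ha.
  unfold invq_val in *.
  rewrite !gmul_assoc, Ha, gmul_1l, <- gmul_assoc, Ha, gmul_1r.
  reflexivity.
Qed.

Lemma invq_rhd_e b : invq_rhd invq_e b = b.
Proof. apply invq_val_inj; simpl. rewrite gmul_1l, gmul_1r. reflexivity. Qed.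

Lemma invq_rhd_to_e a : invq_rhd a invq_e = invq_e.
Proof. apply invq_val_inj; simpl. rewrite gmul_1r. apply invq_val_invol. Qed.

Lemma iter_invq_rhd a k b :
  Nat.iter k (invq_rhd a) b = if Nat.even k then b else invq_rhd a b.
Proof.
  induction k as [|k IH]; [reflexivity|].
  simpl Nat.iter. rewrite IH, Nat.even_succ, <- Nat.negb_even.
  destruct (Nat.even k); simpl; [reflexivity | apply invq_rhdK].
Qed.

Lemma invq_lam_pow n a b : lam_pow_rel invq_rhd a n b (invq_rhd (invq_pi n a) b).
Proof.
  unfold lam_pow_rel, invq_pi.
  destruct (0 <=? n) eqn:Hn; rewrite iter_invq_rhd.
  - apply Z.leb_le in Hn.
    rewrite <- Z_even_of_nat, Z2Nat.id by exact Hn.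
    destruct (Z.even n); [apply invq_rhd_e | reflexivity].
  - apply Z.leb_gt in Hn.
    rewrite <- Z_even_of_nat, Z2Nat.id, Z.even_opp by lia.
    destruct (Z.even n); [now rewrite invq_rhd_e | symmetry; apply invq_rhdK].
Qed.

Lemma invq_power_quandle : is_power_quandle invq invq_rhd invq_pi invq_e.
Proof.
  repeat split.
  - intro a. exists (invq_rhd a). split; intro; apply invq_rhdK.
  - intros a b c. apply invq_val_inj; simpl. pose proof (invq_val_invol a) as Ha.
    unfold invq_val in *. rewrite !gmul_assoc.
    do 2 rewrite <- (gmul_assoc G _ (proj1_sig a) (proj1_sig a)), Ha, gmul_1r.
    reflexivity.
  - intro a. apply invq_val_inj; simpl. pose proof (invq_val_invol a) as Ha.
    unfold invq_val in *. rewrite <- gmul_assoc, Ha, gmul_1r. reflexivity.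
  - apply invq_rhd_e.
  - apply invq_rhd_to_e.
  - intros m n a. unfold invq_pi. rewrite Z.even_mul.
    destruct (Z.even n), (Z.even m); reflexivity.
  - intros n a b. unfold invq_pi.
    destruct (Z.even n); [apply invq_rhd_to_e | reflexivity].
  - apply invq_lam_pow.
Qed.

Lemma invq_val_Gr_rel : Gr_rel invq invq_rhd invq_pi invq_e G invq_val.
Proof.
  repeat split.
  - intros a b. simpl. f_equal. symmetry. apply ginv_invol, invq_val_invol.
  - intros n a. rewrite gpow_invol by apply invq_val_invol.
    unfold invq_pi. destruct (Z.even n); reflexivity.
Qed.

Fixpoint invq_alt (j : nat) (a b : invq) : invq :=
  match j with
  | O => a
  | S j => invq_rhd a (invq_alt j b a)
  end.

Lemma invq_val_alt j a b :
  invq_val (invq_alt j a b) = alt j (invq_val a) (invq_val b).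
Proof.
  revert a b. induction j as [|j IH]; intros a b.
  - unfold alt; simpl. rewrite gmul_1l. reflexivity.
  - rewrite <- conj_alt, <- IH. reflexivity.
Qed.

Section GrRelations.
Variables (H : Group) (f : invq -> H).
Hypothesis Hf : Gr_rel invq invq_rhd invq_pi invq_e H f.

Lemma Gr_rel_e : f invq_e = gone.
Proof. apply Hf. Qed.

Lemma Gr_rel_invol a : gmul (f a) (f a) = gone.
Proof.
  destruct Hf as [_ [Hpi He]].
  pose proof (Hpi 2%Z a) as E. simpl in E. unfold gpow_nat in E. simpl in E.
  rewrite gmul_1r in E. rewrite <- E. exact He.
Qed.

Lemma Gr_rel_conj a b : f (invq_rhd a b) = gmul (gmul (f a) (f b)) (f a).
Proof.
  destruct Hf as [Hc _]. rewrite Hc, ginv_invol by apply Gr_rel_invol.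
  reflexivity.
Qed.

Lemma Gr_rel_alt j a b : f (invq_alt j a b) = alt j (f a) (f b).
Proof.
  revert a b. induction j as [|j IH]; intros a b.
  - unfold alt; simpl. rewrite gmul_1l. reflexivity.
  - simpl invq_alt. rewrite Gr_rel_conj, IH. apply conj_alt.
Qed.

(* The dihedral relation (ab)^k = 1 holding in G transfers to H, because
   then the alternating word of length 2k-1 in a, b equals b in P. *)
Lemma Gr_rel_dihedral a b k :
  gpow_nat (gmul (invq_val a) (invq_val b)) k = gone ->
  gpow_nat (gmul (f a) (f b)) k = gone.
Proof.
  destruct k as [|j]; [reflexivity|]. intro Hk.
  assert (Halt : invq_alt j a b = b).
  { apply invq_val_inj. rewrite invq_val_alt.
    rewrite <- (gmul_1r G (alt j _ _)), <- (invq_val_invol b), gmul_assoc,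
      alt_mulr, Hk, gmul_1l.
    reflexivity. }
  rewrite <- alt_mulr, <- Gr_rel_alt, Halt. apply Gr_rel_invol.
Qed.

End GrRelations.
End InvolutionQuandle.

Section Reflections.
Variables (X : Type) (W : Group) (s : X -> W).
Hypothesis s_invol : forall x, gmul (s x) (s x) = gone.

Inductive reflection : W -> Prop :=
| reflection_gen x : reflection (s x)
| reflection_conj x r : reflection r -> reflection (gmul (gmul (s x) r) (s x)).

Lemma reflection_invol r : reflection r -> gmul r r = gone.
Proof.
  induction 1 as [x|x r _ IH]; [apply s_invol|].
  rewrite !gmul_assoc, <- (gmul_assoc W _ (s x) (s x)), s_invol, gmul_1r,
    <- (gmul_assoc W _ r r), IH, gmul_1r.
  apply s_invol.
Qed.

Lemma reflection_conj_closed a b :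
  reflection a -> reflection b -> reflection (gmul (gmul a b) a).
Proof.
  intro Ha. revert b. induction Ha as [x|x r _ IH]; intros b Hb.
  - now apply reflection_conj.
  - replace (gmul (gmul (gmul (gmul (s x) r) (s x)) b) (gmul (gmul (s x) r) (s x)))
      with (gmul (gmul (s x) (gmul (gmul r (gmul (gmul (s x) b) (s x))) r)) (s x))
      by (rewrite !gmul_assoc; reflexivity).
    apply reflection_conj, IH, reflection_conj, Hb.
Qed.

Definition one_or_reflection (w : W) : Prop := w = gone \/ reflection w.

Lemma one_or_reflection_one : one_or_reflection gone.
Proof. now left. Qed.

Lemma one_or_reflection_invol w : one_or_reflection w -> gmul w w = gone.
Proof. intros [-> | R]; [apply gmul_1l | now apply reflection_invol]. Qed.

Lemma one_or_reflection_conj a b :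
  one_or_reflection a -> one_or_reflection b ->
  one_or_reflection (gmul (gmul a b) a).
Proof.
  intros [-> | Ra] [-> | Rb].
  - left. rewrite !gmul_1l. reflexivity.
  - right. now rewrite gmul_1l, gmul_1r.
  - left. rewrite gmul_1r. now apply reflection_invol.
  - right. now apply reflection_conj_closed.
Qed.

Notation RP := (invq W one_or_reflection).
Notation rhd := (invq_rhd W one_or_reflection one_or_reflection_conj).
Notation pi := (invq_pi W one_or_reflection one_or_reflection_one).
Notation e := (invq_e W one_or_reflection one_or_reflection_one).

Definition gen_refl (x : X) : RP := exist _ (s x) (or_intror (reflection_gen x)).

Lemma hom_agrees_on_reflections (H : Group) (f : RP -> H) (h : W -> H) :
  Gr_rel RP rhd pi e H f -> is_hom h -> (forall x, h (s x) = f (gen_refl x)) ->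
  forall p, h (invq_val W _ p) = f p.
Proof.
  intros Hf Hh Hhs [w [-> | R]].
  - simpl. rewrite hom_one, <- (Gr_rel_e _ _ _ _ _ _ Hf) by exact Hh.
    f_equal. now apply invq_val_inj.
  - simpl. generalize (or_intror R : one_or_reflection w).
    induction R as [x|x r R IH]; intro Rw.
    + rewrite Hhs. f_equal. now apply invq_val_inj.
    + rewrite !Hh, Hhs, (IH (or_intror R)), <- (Gr_rel_conj _ _ _ _ _ _ Hf).
      f_equal. now apply invq_val_inj.
Qed.

Lemma reflection_quandle_presents (m : X -> X -> option nat) :
  is_presented_by X (coxeter_rel m) W s ->
  is_presented_by RP (Gr_rel RP rhd pi e) W (invq_val W _).
Proof.
  intros [[_ Hrel] Huniv].
  split; [apply invq_val_Gr_rel, one_or_reflection_invol|].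
  intros H f Hf.
  assert (Hcox : coxeter_rel m H (fun x => f (gen_refl x))).
  { split; [intro; exact (Gr_rel_invol _ _ _ _ _ _ Hf _)|].
    intros x y k Hxy Hk.
    apply (Gr_rel_dihedral _ _ _ one_or_reflection_invol _ _ _ Hf).
    exact (Hrel x y k Hxy Hk). }
  destruct (Huniv H _ Hcox) as [h [Hh [Hhs Hunique]]].
  exists h. split; [exact Hh|]. split.
  - exact (hom_agrees_on_reflections H f h Hf Hh Hhs).
  - intros h' Hh' Hh's. apply (Hunique h' Hh'). intro x. apply (Hh's (gen_refl x)).
Qed.

End Reflections.

Theorem mainTheorem16 :
  forall (S : Type) (m : S -> S -> option nat) (W : Group) (s : S -> W),
    is_coxeter_group S m W s -> pq_generated W.
Proof.
  intros X m W s [_ Hpres].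
  assert (s_invol : forall x, gmul (s x) (s x) = gone) by apply Hpres.
  exists (invq W (one_or_reflection X W s)),
    (invq_rhd W _ (one_or_reflection_conj X W s s_invol)),
    (invq_pi W _ (one_or_reflection_one X W s)),
    (invq_e W _ (one_or_reflection_one X W s)).
  split.
  - apply invq_power_quandle, one_or_reflection_invol, s_invol.
  - exists W, (invq_val W _). split.
    + exact (reflection_quandle_presents X W s s_invol m Hpres).
    + apply group_iso_refl.
Qed.
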